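(* Let $K$ be a precubical set, $\alpha\in K_0$ and $\epsilon\in\,]0,1[$. Let $\mathcal{G}^-_\alpha(K)$ be the quotient of the homotopy branching space $\mathcal{P}^-_\alpha(K,\epsilon)$ by the equivalence relation $\gamma_1\simeq^-\gamma_2$ if there exists $0<\epsilon'<\epsilon$ such that $\gamma_1\!\restriction_{[0,\epsilon']}=\gamma_2\!\restriction_{[0,\epsilon']}$. Then the map $\mathcal{G}^-_{0_2}(\partial\square[2])\to \mathcal{G}^-_{0_2}(\square[2])$ is not a closed inclusion, and therefore not an r-cofibration for $r\in\{q,m,h\}$.
   Context: ${\mathbf{Top}}$ denotes the category of $\Delta$-generated spaces (or of $\Delta$-Hausdorff $\Delta$-generated spaces), with internal hom $\mathbf{TOP}(-,-)$, equipped with its q-model structure (Quillen), m-model structure (mixed) or h-model structure (Hurewicz/Strøm); r-cofibration means cofibration of the r-model structure. $\square^{op}\mathbf{Set}$ is the category of precubical sets, $\square[n]$ the $n$-cube and $\partial\square[n]$ its boundary (cubes of dimension $\leqslant n-1$). For a precubical set $K$, $|K|_{geom}=\int^{[n]}K_n.[0,1]^n$ is its geometric realization and each $n$-cube $c$ induces $|c|_{geom}:[0,1]^n\to|K|_{geom}$. The initial vertex of an $n$-cube $c$ is $c^-=\partial_1^0\cdots\partial_n^0c$, and $\mathcal{C}^-_\alpha(K)=\{c\in K\mid\dim(c)\geqslant1,\ c^-=\alpha\}$. Let $0_n=(0,\dots,0)$. For $n\geqslant1$, $N_n(\epsilon)$ is the set of natural directed paths $\phi:[0,\epsilon]\to[0,1]^n$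 (non-decreasing in each coordinate, with sum of coordinates equal to $t$ at time $t$), with the $\Delta$-kelleyfication of the relative topology from $\mathbf{TOP}([0,\epsilon],[0,1]^n)$. Then $\mathcal{P}^-_\alpha(K,\epsilon)=\{|c|_{geom}\phi\mid c\in\mathcal{C}^-_\alpha(K),\ \phi\in N_{\dim(c)}(\epsilon)\}$ with the $\Delta$-kelleyfication of the relative topology from $\mathbf{TOP}([0,\epsilon],|K|_{geom})$. *)

From Stdlib Require Import Reals ProofIrrelevance ClassicalEpsilon
  FunctionalExtensionality PropExtensionality.
From Stdlib Require List.
From mathcomp Require Import all_boot.
Unset Printing Implicit Defensive.

Local Open Scope R_scope.

Definition pset (X : Type) := X -> Prop.
Definition topo (X : Type) := pset (pset X).

Definition tcont {X Y : Type} (TX : topo X) (TY : topo Y) (f : X -> Y) :=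
  forall V, TY V -> TX (fun x => V (f x)).

Definition tclosed {X : Type} (T : topo X) (C : pset X) := T (fun x => ~ C x).

Definition initial {X Y : Type} (TY : topo Y) (f : X -> Y) : topo X :=
  fun U => exists V, TY V /\ forall x, U x <-> V (f x).

Definition gen_top {X : Type} (B : pset (pset X)) : topo X :=
  fun U => forall x, U x -> exists l : list (pset X),
    List.Forall B l /\ List.Forall (fun b => b x) l /\
    forall y, List.Forall (fun b => b y) l -> U y.

Definition compact {X : Type} (T : topo X) (C : pset X) :=
  forall (I : Type) (U : I -> pset X), (forall i, T (U i)) ->
    (forall x, C x -> exists i, U i x) ->
    exists l : list I, forall x, C x -> exists i, List.In i l /\ U i x.

Definition compact_open {A B : Type} (TA : topo A) (TB : topo B) : topo (A -> B) :=
  gen_top (fun W => exists C V, compact TA C /\ TB V /\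
                      forall f, W f <-> (forall a, C a -> V (f a))).

Definition prod_top {A B : Type} (TA : topo A) (TB : topo B) : topo (A * B) :=
  gen_top (fun W => (exists U, TA U /\ forall p, W p <-> U p.1) \/
                    (exists V, TB V /\ forall p, W p <-> V p.2)).

(** [0,1]^n : points are sequences vanishing from index n on *)
Definition cube (n : nat) :=
  {x : nat -> R | forall k, ((k < n)%N -> 0 <= x k <= 1) /\ ((n <= k)%N -> x k = 0)}.

Definition cube_top (n : nat) : topo (cube n) :=
  fun U => forall x, U x -> exists r, 0 < r /\ forall y : cube n,
    (forall k, (k < n)%N -> Rabs (proj1_sig y k - proj1_sig x k) < r) -> U y.

Definition Iv (e : R) := {t : R | 0 <= t <= e}.

Definition Iv_top (e : R) : topo (Iv e) :=
  fun U => forall x, U x -> exists r, 0 < r /\ forall y : Iv e,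
    Rabs (proj1_sig y - proj1_sig x) < r -> U y.

Definition Iv1_0 : Iv 1 := exist _ 0 (conj (Rle_refl 0) Rle_0_1).

Definition simplex (n : nat) :=
  {x : nat -> R | (forall k, (k <= n)%N -> 0 <= x k) /\
                  (forall k, (n < k)%N -> x k = 0) /\ sum_f_R0 x n = 1}.

Definition simplex_top (n : nat) : topo (simplex n) :=
  fun U => forall x, U x -> exists r, 0 < r /\ forall y : simplex n,
    (forall k, (k <= n)%N -> Rabs (proj1_sig y k - proj1_sig x k) < r) -> U y.

(** Delta-kelleyfication: final topology w.r.t. all continuous maps from
    topological simplices *)
Definition kel {X : Type} (T : topo X) : topo X :=
  fun U => forall n (phi : simplex n -> X), tcont (simplex_top n) T phi ->
    simplex_top n (fun s => U (phi s)).

Definition delta_generated {X : Type} (T : topo X) := forall U, kel T U -> T U.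

(** closed inclusion in the category of Delta-generated spaces: injective,
    closed image, and the source carries the Delta-kelleyfication of the
    relative topology *)
Definition closed_inclusion {X Y : Type} (TX : topo X) (TY : topo Y) (f : X -> Y) :=
  injective f /\ tclosed TY (fun y => exists x, y = f x) /\
  forall U, TX U <-> kel (initial TY f) U.

(** Hurewicz cofibration (homotopy extension property w.r.t. all
    Delta-generated spaces; products are Delta-kelleyfied) *)
Definition hurewicz_cof {A X : Type} (TA : topo A) (TX : topo X) (f : A -> X) :=
  forall (Z : Type) (TZ : topo Z), delta_generated TZ ->
  forall (h : X -> Z) (H : A * Iv 1 -> Z),
    tcont TX TZ h -> tcont (kel (prod_top TA (Iv_top 1))) TZ H ->
    (forall a, H (a, Iv1_0) = h (f a)) ->
    exists H' : X * Iv 1 -> Z,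
      tcont (kel (prod_top TX (Iv_top 1))) TZ H' /\
      (forall x, H' (x, Iv1_0) = h x) /\ (forall a t, H' (f a, t) = H (a, t)).

(** h-cofibrations (Strom/Hurewicz model structure) = closed Hurewicz cofibrations *)
Definition h_cofibration {A X : Type} (TA : topo A) (TX : topo X) (f : A -> X) :=
  closed_inclusion TA TX f /\ hurewicz_cof TA TX f.

(** * Precubical sets (faces indexed from 0: face n i a is d_{i+1}^a) *)

Record precubical := Precubical {
  cell :> nat -> Type;
  face : forall n, nat -> bool -> cell n.+1 -> cell n;
  face_comm : forall n i j a b (c : cell n.+2), (i < j)%N -> (j <= n.+1)%N ->
    face n i a (face n.+1 j b c) = face n j.-1 b (face n.+1 i a c) }.

Record pc_hom (K L : precubical) := PcHom {
  hmap : forall n, K n -> L n;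
  hface : forall n i a (c : K n.+1), (i <= n)%N ->
    hmap n (face K n i a c) = face L n i a (hmap n.+1 c) }.
Arguments hmap {K L} _ {n}.
Arguments hface {K L} _ {n}.

(** initial vertex c^- = d_1^0 ... d_n^0 c *)
Fixpoint init_vertex (K : precubical) (n : nat) : K n -> K 0%N :=
  match n return K n -> K 0%N with
  | 0%N => fun c => c
  | m.+1 => fun c => init_vertex K m (face K m m false c)
  end.
Arguments init_vertex {K n}.

(** coface map delta_i^a : [0,1]^n -> [0,1]^(n+1), inserting a at position i *)
Definition ins (i : nat) (a : bool) (x : nat -> R) : nat -> R :=
  fun k => if (k < i)%N then x k else if k == i then (if a then 1 else 0) else x k.-1.

(** geometric realization |K| = coend of K_n . [0,1]^n *)
Definition rpt (K : precubical) := {n : nat & (K n * cube n)%type}.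
Definition mkpt (K : precubical) (n : nat) (c : K n) (x : cube n) : rpt K :=
  existT (fun m => (K m * cube m)%type) n (c, x).
Arguments mkpt {K n}.

Definition rbase (K : precubical) (p q : rpt K) :=
  exists n i a (c : K n.+1) (x : cube n) (y : cube n.+1), (i <= n)%N /\
    p = mkpt (face K n i a c) x /\ q = mkpt c y /\
    forall k, proj1_sig y k = ins i a (proj1_sig x) k.
Arguments rbase {K}.

Definition Rgen (K : precubical) (p q : rpt K) :=
  forall E : rpt K -> rpt K -> Prop,
    (forall p, E p p) -> (forall p q, E p q -> E q p) ->
    (forall p q r, E p q -> E q r -> E p r) ->
    (forall p q, rbase p q -> E p q) -> E p q.
Arguments Rgen {K}.

Definition cls (K : precubical) (p : rpt K) : pset (rpt K) := fun q => Rgen p q.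
Arguments cls {K}.

Definition real (K : precubical) := {S : pset (rpt K) | exists p, S = cls p}.

Definition rcell (K : precubical) (n : nat) (c : K n) (x : cube n) : real K :=
  exist _ (cls (mkpt c x)) (ex_intro _ _ erefl).
Arguments rcell {K n}.

Definition real_top (K : precubical) : topo (real K) :=
  fun U => forall n (c : K n), cube_top n (fun x => U (rcell c x)).

Definition natural_path (n : nat) (e : R) (phi : Iv e -> cube n) :=
  (forall k (s t : Iv e), proj1_sig s <= proj1_sig t ->
      proj1_sig (phi s) k <= proj1_sig (phi t) k) /\
  (forall t : Iv e, sum_f_R0 (proj1_sig (phi t)) n.-1 = proj1_sig t).
Arguments natural_path {n e}.

Definition Pm_pred (K : precubical) (alpha : K 0%N) (e : R) (g : Iv e -> real K) :=
  exists n (c : K n.+1), init_vertex c = alpha /\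
    exists phi : Iv e -> cube n.+1, natural_path phi /\
      forall t, g t = rcell c (phi t).
Arguments Pm_pred {K} alpha {e}.

Definition Pm (K : precubical) (alpha : K 0%N) (e : R) := {g : Iv e -> real K | Pm_pred alpha g}.
Arguments Pm {K}.

Definition TOP_top (K : precubical) (e : R) : topo (Iv e -> real K) :=
  kel (compact_open (Iv_top e) (real_top K)).

Definition Pm_top (K : precubical) (alpha : K 0%N) (e : R) : topo (Pm alpha e) :=
  kel (initial (TOP_top K e) (@proj1_sig _ _)).
Arguments Pm_top {K}.

Definition germ_eq {X : Type} (e : R) (g1 g2 : Iv e -> X) :=
  exists e', 0 < e' < e /\ forall t : Iv e, proj1_sig t <= e' -> g1 t = g2 t.

Definition G (K : precubical) (alpha : K 0%N) (e : R) :=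
  {S : pset (Pm alpha e) | exists g : Pm alpha e,
      S = fun d => germ_eq e (proj1_sig g) (proj1_sig d)}.
Arguments G {K}.

Definition gq (K : precubical) (alpha : K 0%N) (e : R) (g : Pm alpha e) : G alpha e :=
  exist _ (fun d => germ_eq e (proj1_sig g) (proj1_sig d)) (ex_intro _ g erefl).
Arguments gq {K alpha e}.

Definition G_top (K : precubical) (alpha : K 0%N) (e : R) : topo (G alpha e) :=
  fun U => Pm_top alpha e (fun g => U (gq g)).
Arguments G_top {K}.

Section Functor.
Variables (K L : precubical) (f : pc_hom K L).

Definition fpt (p : rpt K) : rpt L :=
  mkpt (hmap f (projT2 p).1) (projT2 p).2.

Definition real_map (S : real K) : real L :=
  let p := proj1_sig (constructive_indefinite_description _ (proj2_sig S)) in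
  exist _ (cls (fpt p)) (ex_intro _ _ erefl).

Lemma Rgen_refl {M : precubical} (p : rpt M) : Rgen p p.
Proof. by rewrite /Rgen => E r _ _ _. Qed.
Lemma Rgen_sym {M : precubical} {p q : rpt M} : Rgen p q -> Rgen q p.
Proof. by move=> H; rewrite /Rgen => E r s t b; apply s; apply: (H E r s t b). Qed.
Lemma Rgen_trans {M : precubical} {p q u : rpt M} : Rgen p q -> Rgen q u -> Rgen p u.
Proof. by move=> H1 H2; rewrite /Rgen => E r s t b; apply (t _ q); [apply: (H1 E r s t b)|apply: (H2 E r s t b)]. Qed.
Lemma Rgen_base {M : precubical} {p q : rpt M} : rbase p q -> Rgen p q.
Proof. by move=> H; rewrite /Rgen => E r s t b; apply: b. Qed.

Lemma Rgen_map (p q : rpt K) : Rgen p q -> Rgen (fpt p) (fpt q).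
Proof.
move=> H; apply: (H (fun p q => Rgen (fpt p) (fpt q))).
- by move=> r; apply: Rgen_refl.
- by move=> r s; apply: Rgen_sym.
- by move=> r s t; apply: Rgen_trans.
move=> r s [n [i [a [c [x [y [Hi [-> [-> Hy]]]]]]]]].
apply: Rgen_base; exists n, i, a, (hmap f c), x, y; split=> //.
by rewrite /fpt /= hface.
Qed.

Lemma cls_eq {M : precubical} {p q : rpt M} : Rgen p q -> cls p = cls q.
Proof.
move=> H; apply: functional_extensionality => r; apply: propositional_extensionality.
rewrite /cls; split=> H'; first exact: (Rgen_trans (Rgen_sym H) H').
exact: (Rgen_trans H H').
Qed.

Lemma real_eq {M : precubical} (S T : real M) : proj1_sig S = proj1_sig T -> S = T.
Proof.
case: S => S HS; case: T => T HT /= E; subst T.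
by rewrite (proof_irrelevance _ HS HT).
Qed.

Lemma real_map_cell n (c : K n) (x : cube n) :
  real_map (rcell c x) = rcell (hmap f c) x.
Proof.
apply: real_eq; rewrite /real_map /=.
case: (constructive_indefinite_description _ _) => p /= Hp.
have Hr : Rgen (mkpt c x) p by rewrite -/(cls (mkpt c x) p) Hp; apply: Rgen_refl.
exact: (cls_eq (Rgen_sym (Rgen_map _ _ Hr))).
Qed.

Lemma init_vertex_map n (c : K n) : init_vertex (hmap f c) = hmap f (init_vertex c).
Proof.
elim: n c => [//|n IH] c /=.
by rewrite -hface // IH.
Qed.

Lemma Pm_map_pred (alpha : K 0%N) (e : R) (g : Pm alpha e) :
  Pm_pred (hmap f alpha) (fun t => real_map (proj1_sig g t)).
Proof.
case: g => g [n [c [Hc [phi [Hphi Hg]]]]] /=.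
exists n, (hmap f c); split; first by rewrite init_vertex_map Hc.
exists phi; split=> // t; by rewrite Hg real_map_cell.
Qed.

Definition Pm_map (alpha : K 0%N) (e : R) (g : Pm alpha e) : Pm (hmap f alpha) e :=
  exist _ _ (Pm_map_pred alpha e g).

Definition G_map (alpha : K 0%N) (e : R) (S : G alpha e) : G (hmap f alpha) e :=
  gq (Pm_map alpha e (proj1_sig (constructive_indefinite_description _ (proj2_sig S)))).

End Functor.

(** vertices: (x0,x1) in {0,1}^2;  edges: (d,v) with d = false: coordinate 0
    free and coordinate 1 equal to v; d = true: coordinate 1 free and
    coordinate 0 equal to v *)
Definition vface (a : bool) (e : bool * bool) : bool * bool :=
  if e.1 then (e.2, a) else (a, e.2).
Definition eface (i : nat) (a : bool) : bool * bool :=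
  if i == 0%N then (true, a) else (false, a).

Definition sq2_cell (n : nat) : Type :=
  match n with 0 => (bool * bool)%type | 1 => (bool * bool)%type | 2 => unit | _ => Empty_set end.

Definition sq2_face (n : nat) : nat -> bool -> sq2_cell n.+1 -> sq2_cell n :=
  match n return nat -> bool -> sq2_cell n.+1 -> sq2_cell n with
  | 0 => fun _ a e => vface a e
  | 1 => fun i a _ => eface i a
  | _.+2 => fun _ _ v => match v with end
  end.

Lemma sq2_comm n i j a b (c : sq2_cell n.+2) : (i < j)%N -> (j <= n.+1)%N ->
  sq2_face n i a (sq2_face n.+1 j b c) = sq2_face n j.-1 b (sq2_face n.+1 i a c).
Proof.
case: n c => [|n] c; last by case: c.
case: j => [|[|j]] //; case: i => //.
Qed.

Definition sq2 : precubical := Precubical sq2_cell sq2_face sq2_comm.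

Definition bd2_cell (n : nat) : Type :=
  match n with 0 => (bool * bool)%type | 1 => (bool * bool)%type | _ => Empty_set end.

Definition bd2_face (n : nat) : nat -> bool -> bd2_cell n.+1 -> bd2_cell n :=
  match n return nat -> bool -> bd2_cell n.+1 -> bd2_cell n with
  | 0 => fun _ a e => vface a e
  | _.+1 => fun _ _ v => match v with end
  end.

Lemma bd2_comm n i j a b (c : bd2_cell n.+2) : (i < j)%N -> (j <= n.+1)%N ->
  bd2_face n i a (bd2_face n.+1 j b c) = bd2_face n j.-1 b (bd2_face n.+1 i a c).
Proof. by case: c. Qed.

Definition bd2 : precubical := Precubical bd2_cell bd2_face bd2_comm.

Definition incl2_map (n : nat) : bd2 n -> sq2 n :=
  match n return bd2_cell n -> sq2_cell n with
  | 0 => fun x => x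
  | 1 => fun x => x
  | _.+2 => fun v => match v with end
  end.

Lemma incl2_face n i a (c : bd2 n.+1) : (i <= n)%N ->
  incl2_map n (face bd2 n i a c) = face sq2 n i a (incl2_map n.+1 c).
Proof. by case: n c => [|n] c //; case: c. Qed.

Definition incl2 : pc_hom bd2 sq2 := PcHom bd2 sq2 incl2_map incl2_face.

Definition v00 : bool * bool := (false, false).

(* The image of G(∂□[2]) in G(□[2]) is not closed.  For s > 0 the directed
   path γ_s of the square that runs along the bottom edge up to time s and
   then turns into the interior has the germ of an edge path, so its class
   lies in the image; but γ_0 is the diagonal, which is in the interior at
   every positive time, so its class does not.  Since s ↦ γ_s is continuous
   from the 1-simplex into the homotopy branching space, the complement of
   the image cannot be open.  Closed inclusions, hence h-cofibrations, have
   closed image. *)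
From Pilot Require Import Defs.
From Stdlib Require Import Reals Lra ProofIrrelevance ClassicalEpsilon
  FunctionalExtensionality PropExtensionality.
From Stdlib Require List.
From mathcomp Require Import all_boot.
Unset Printing Implicit Defensive.
Local Open Scope R_scope.

Ltac lra_minmax := unfold Rmin, Rmax in *; repeat destruct Rle_dec; try split_Rabs; lra.

Lemma list_min_pos (A : Type) (f : A -> R) (l : list A) :
  (forall i, List.In i l -> 0 < f i) ->
  exists r, 0 < r /\ forall i, List.In i l -> r <= f i.
Proof.
elim: l => [|j l IH] f_pos; first by exists 1; split=> //; lra.
have [r [r_pos r_le]] := IH (fun i li => f_pos i (or_intror li)).
have fj_pos := f_pos j (or_introl erefl).
exists (Rmin (f j) r); split; first by lra_minmax.
move=> i [<-|li]; first by lra_minmax.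
by have := r_le i li; lra_minmax.
Qed.

Lemma tcont_initial (X Y Z : Type) (TX : topo X) (TY : topo Y) (g : Z -> Y) (f : X -> Z) :
  tcont TX TY (fun x => g (f x)) -> tcont TX (initial TY g) f.
Proof.
move=> g_f_cont V [W [W_open VW]].
have -> : (fun x => V (f x)) = (fun x => W (g (f x))).
  by apply: functional_extensionality => x; apply: propositional_extensionality.
exact: g_f_cont.
Qed.

Lemma tcont_simplex_kel n (X : Type) (T : topo X) (f : simplex n -> X) :
  tcont (simplex_top n) T f -> tcont (simplex_top n) (kel T) f.
Proof. by move=> f_cont V; apply. Qed.

Lemma simplex_top_Forall n (l : list (pset (simplex n))) :
  List.Forall (simplex_top n) l -> simplex_top n (fun x => List.Forall (fun U => U x) l).
Proof.
elim: l => [|U l IH] l_open x lx.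
  by exists 1; split=> [|y _]; [lra | constructor].
inversion l_open as [|? ? U_open l'_open]; inversion lx as [|? ? Ux l'x]; subst.
have [r1 [r1_pos near1]] := U_open x Ux.
have [r2 [r2_pos near2]] := IH l'_open x l'x.
exists (Rmin r1 r2); split; first by lra_minmax.
move=> y xy; constructor.
  by apply: near1 => k k_le; have := xy k k_le; lra_minmax.
by apply: near2 => k k_le; have := xy k k_le; lra_minmax.
Qed.

Lemma tcont_simplex_gen_top n (X : Type) (B : pset (pset X)) (F : simplex n -> X) :
  (forall b, B b -> simplex_top n (fun s => b (F s))) ->
  tcont (simplex_top n) (gen_top B) F.
Proof.
move=> B_cont V V_open x Vx.
have [l [Bl [lx lV]]] := V_open _ Vx.
have l_open : List.Forall (simplex_top n) (List.map (fun b s => b (F s)) l).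
  by apply/List.Forall_map; exact: List.Forall_impl Bl.
have [r [r_pos near]] := simplex_top_Forall n _ l_open x (iffRL (List.Forall_map _ _ _) lx).
by exists r; split=> // y xy; apply/lV; exact: (iffLR (List.Forall_map _ _ _) (near y xy)).
Qed.

Section LipschitzFamily.
Variables (K : precubical) (n : nat) (c : K n) (e : R) (h : R -> Iv e -> cube n).
Hypothesis h_lip : forall s s' (t t' : Iv e) k, (k < n)%N ->
  Rabs (proj1_sig (h s t) k - proj1_sig (h s' t') k)
    <= Rabs (s - s') + Rabs (proj1_sig t - proj1_sig t').

Lemma lipschitz_family_compact_open (C : pset (Iv e)) (V : pset (real K)) s0 :
  Defs.compact (Iv_top e) C -> real_top K V ->
  (forall a, C a -> V (rcell c (h s0 a))) ->
  exists r, 0 < r /\ forall s, Rabs (s - s0) < r -> forall a, C a -> V (rcell c (h s a)).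
Proof.
move=> C_compact V_open C_V.
pose P (p : Iv e * R) := 0 < p.2 /\ forall y : cube n,
  (forall k, (k < n)%N -> Rabs (proj1_sig y k - proj1_sig (h s0 p.1) k) < p.2) ->
  V (rcell c y).
pose U (i : {p | P p}) (t : Iv e) :=
  Rabs (proj1_sig t - proj1_sig (proj1_sig i).1) < (proj1_sig i).2 / 2.
have U_open : forall i, Iv_top e (U i).
  move=> [[a ra] [ra_pos ra_near]] t; rewrite /U /= => at_.
  exists (ra / 2 - Rabs (proj1_sig t - proj1_sig a)); split; first lra.
  by move=> y; lra_minmax.
have U_cover : forall t, C t -> exists i, U i t.
  move=> t Ct; have [r [r_pos near]] := V_open n c _ (C_V t Ct).
  by exists (exist P (t, r) (conj r_pos near)); rewrite /U /=; lra_minmax.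
have [l l_cover] := C_compact _ U U_open U_cover.
have radius_pos : forall i, List.In i l -> 0 < (proj1_sig i).2 / 2.
  by move=> [[b rb] [rb_pos rb_near]] _; simpl in *; lra.
have [r [r_pos r_le]] := list_min_pos _ _ l radius_pos.
exists r; split=> // s s_s0 a Ca.
have [[[b rb] [rb_pos near]] [li a_b]] := l_cover a Ca.
have := r_le _ li; rewrite /U /= in a_b * => r_rb.
apply: (near) => k k_lt; have := h_lip s s0 a b k k_lt; simpl in *; lra.
Qed.

End LipschitzFamily.

Lemma germ_eq_refl (X : Type) e (g : Iv e -> X) : 0 < e -> germ_eq e g g.
Proof. by move=> e_pos; exists (e / 2); split; [lra|]. Qed.

Lemma germ_eq_sym (X : Type) e (g h : Iv e -> X) : germ_eq e g h -> germ_eq e h g.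
Proof. by move=> [e' [e'_bd gh]]; exists e'; split=> // t t_le; rewrite gh. Qed.

Lemma germ_eq_trans (X : Type) e (g h k : Iv e -> X) :
  germ_eq e g h -> germ_eq e h k -> germ_eq e g k.
Proof.
move=> [e1 [e1_bd gh]] [e2 [e2_bd hk]]; exists (Rmin e1 e2); split; first by lra_minmax.
by move=> t t_le; rewrite gh ?hk //; lra_minmax.
Qed.

Lemma germ_eq_comp (X Y : Type) e (f : X -> Y) (g h : Iv e -> X) :
  germ_eq e g h -> germ_eq e (fun t => f (g t)) (fun t => f (h t)).
Proof. by move=> [e' [e'_bd gh]]; exists e'; split=> // t t_le; rewrite gh. Qed.

Section GermQuotient.
Context {K : precubical} {alpha : K 0%N} {e : R}.

Lemma gq_surj (S : G alpha e) : exists g, S = gq g.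
Proof. by case: S => S [g E]; exists g; apply: subset_eq_compat. Qed.

Lemma gq_eq (g1 g2 : Pm alpha e) : germ_eq e (proj1_sig g1) (proj1_sig g2) -> gq g1 = gq g2.
Proof.
move=> g12; apply: subset_eq_compat.
apply: functional_extensionality => d; apply: propositional_extensionality.
by split; apply: germ_eq_trans; [apply: germ_eq_sym|].
Qed.

Lemma gq_germ (g1 g2 : Pm alpha e) : 0 < e ->
  gq g1 = gq g2 -> germ_eq e (proj1_sig g1) (proj1_sig g2).
Proof.
move=> e_pos /(f_equal (fun S => proj1_sig S g2)) /= ->.
exact: germ_eq_refl.
Qed.

End GermQuotient.

Lemma G_map_gq (K L : precubical) (f : pc_hom K L) (alpha : K 0%N) e (g : Pm alpha e) :
  0 < e ->
  G_map K L f alpha e (gq g) = gq (Pm_map K L f alpha e g).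
Proof.
move=> e_pos; rewrite /G_map; case: constructive_indefinite_description => g' /= gg'.
apply: gq_eq; apply: germ_eq_comp.
by rewrite -(f_equal (fun S => S g) gg'); apply: germ_eq_refl.
Qed.

Definition b2R (b : bool) : R := if b then 1 else 0.

Definition sq2_coord (p : rpt sq2) : R * R :=
  match p with existT n (c, x) =>
  (match n return sq2_cell n -> cube n -> R * R with
   | 0%N => fun c _ => (b2R c.1, b2R c.2)
   | 1%N => fun c x =>
       if c.1 then (b2R c.2, proj1_sig x 0%N) else (proj1_sig x 0%N, b2R c.2)
   | 2%N => fun _ x => (proj1_sig x 0%N, proj1_sig x 1%N)
   | _ => fun _ _ => (0, 0)
   end) c x
  end.

Lemma sq2_coord_rbase (p q : rpt sq2) : rbase p q -> sq2_coord p = sq2_coord q.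
Proof.
move=> [n [i [a [c [x [y [i_le [-> [-> y_ins]]]]]]]]].
case: n c x y i_le y_ins => [|[|n]] c x y i_le y_ins /=.
- case: i i_le y_ins => // _ y_ins; rewrite y_ins {y_ins} /ins /=.
  by case: c => [[] []]; case: a.
- by case: i i_le y_ins => [|[|i]] // _ y_ins; rewrite !y_ins {y_ins} /ins /=; case: a.
- by case: c.
Qed.

Lemma sq2_coord_Rgen (p q : rpt sq2) : Rgen p q -> sq2_coord p = sq2_coord q.
Proof.
move=> pq; apply: (pq (fun p q => sq2_coord p = sq2_coord q)).
- by [].
- by move=> ? ? ->.
- by move=> ? ? ? -> ->.
- exact: sq2_coord_rbase.
Qed.

Lemma sq2_coord_rcell n m (c : sq2 n) (d : sq2 m) x y :
  rcell c x = rcell d y -> sq2_coord (mkpt c x) = sq2_coord (mkpt d y).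
Proof.
move=> cd; apply: sq2_coord_Rgen; change (cls (mkpt c x) (mkpt d y)).
have /= -> := f_equal (@proj1_sig _ _) cd; exact: Rgen_refl.
Qed.

(* For s > 0 the path follows the edge x_1 = 0 up to time s and then moves
   diagonally; for s <= 0 it is the diagonal t ↦ (t/2, t/2). *)
Definition turn_coord (s t : R) (k : nat) : R :=
  let m := Rmin t (Rmax s 0) in
  match k with 0%N => (t + m) / 2 | 1%N => (t - m) / 2 | _ => 0 end.

Lemma turn_coord_lip s s' t t' k : (k < 2)%N ->
  Rabs (turn_coord s t k - turn_coord s' t' k) <= Rabs (s - s') + Rabs (t - t').
Proof. by case: k => [|[|k]] //= _; lra_minmax. Qed.

Section Paths.
Variables (e : R) (e_lt1 : e < 1).

Lemma turn_coord_cube s (t : Iv e) k :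
  ((k < 2)%N -> 0 <= turn_coord s (proj1_sig t) k <= 1) /\
  ((2 <= k)%N -> turn_coord s (proj1_sig t) k = 0).
Proof. by case: t => t /= t_bd; case: k => [|[|k]] /=; split=> // _; lra_minmax. Qed.

Definition turn_cube s (t : Iv e) : cube 2 :=
  exist _ (turn_coord s (proj1_sig t)) (turn_coord_cube s t).

Definition turn_path s (t : Iv e) : real sq2 := @rcell sq2 2%N tt (turn_cube s t).

Lemma turn_path_Pm s : Pm_pred (v00 : sq2 0%N) (turn_path s).
Proof.
exists 1%N, tt; split=> //; exists (turn_cube s); split=> //; split.
- by move=> [|[|k]] [a a_bd] [b b_bd] /= ab; lra_minmax.
- by move=> [t t_bd] /=; lra.
Qed.

Definition turn_Pm s : Pm (v00 : sq2 0%N) e := exist _ _ (turn_path_Pm s).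

Lemma edge_coord_cube (t : Iv e) k :
  ((k < 1)%N -> 0 <= (if k is 0%N then proj1_sig t else 0) <= 1) /\
  ((1 <= k)%N -> (if k is 0%N then proj1_sig t else 0) = 0).
Proof. by case: t => t /= t_bd; case: k => [|k] /=; split=> // _; lra. Qed.

Definition edge_cube (t : Iv e) : cube 1 := exist _ _ (edge_coord_cube t).

Definition edge_path (t : Iv e) : real bd2 := @rcell bd2 1%N (false, false) (edge_cube t).

Lemma edge_path_Pm : Pm_pred (v00 : bd2 0%N) edge_path.
Proof.
exists 0%N, (false, false); split=> //; exists edge_cube; split=> //; split.
- by move=> [|k] [a a_bd] [b b_bd] //=; lra.
- by move=> [t t_bd].
Qed.

Definition edge_Pm : Pm (v00 : bd2 0%N) e := exist _ _ edge_path_Pm.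

Lemma turn_germ_edge s : 0 < e -> 0 < s ->
  germ_eq e (turn_path s) (fun t => real_map bd2 sq2 incl2 (edge_path t)).
Proof.
move=> e_pos s_pos; exists (Rmin s (e / 2)); split; first by lra_minmax.
move=> t t_le; rewrite /edge_path real_map_cell; apply: real_eq => /=.
apply: cls_eq; apply: Rgen_sym; apply: Rgen_base.
exists 1%N, 1%N, false, tt, (edge_cube t), (turn_cube s t); do 3!split=> //.
by case: t t_le => t t_bd /= t_le [|[|k]] //=; rewrite /ins /=; lra_minmax.
Qed.

Lemma turn_in_image s : 0 < e -> 0 < s ->
  exists x, gq (turn_Pm s) = G_map bd2 sq2 incl2 v00 e x.
Proof.
move=> e_pos s_pos; exists (gq edge_Pm); rewrite G_map_gq //.
by apply: (@gq_eq sq2 v00); exact: turn_germ_edge.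
Qed.

(* At a time t > 0 the diagonal is at (t/2, t/2), whereas a path in an edge
   starting at 0_2 has one coordinate equal to t. *)
Lemma diagonal_not_in_image x : 0 < e -> gq (turn_Pm 0) <> G_map bd2 sq2 incl2 v00 e x.
Proof.
move=> e_pos; have [[g g_Pm] ->] := gq_surj x; rewrite G_map_gq // => /gq_germ.
case/(_ e_pos) => e' [e'_bd same].
case: g_Pm same => n [c [_ [phi [[_ phi_sum] g_phi]]]] /= same.
have e'_Iv : 0 <= e' <= e by lra.
pose t : Iv e := exist _ e' e'_Iv.
move: (same t (Rle_refl _)); rewrite g_phi real_map_cell => /sq2_coord_rcell.
case: n c phi phi_sum g_phi => [|n] c phi phi_sum g_phi; last by case: c.
have /= phi_t := phi_sum t.
by case: c g_phi => [[] ?] _ /=; rewrite phi_t; case=> *; lra_minmax.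
Qed.

Lemma turn_Pm_cont :
  tcont (simplex_top 1) (initial (TOP_top sq2 e) (@proj1_sig _ _))
    (fun u => turn_Pm (proj1_sig u 1%N)).
Proof.
apply: tcont_initial; apply: tcont_simplex_kel; apply: tcont_simplex_gen_top.
move=> W [C [V [C_compact [V_open W_def]]]] u0 /W_def u0_W.
have [r [r_pos near]] := lipschitz_family_compact_open sq2 2 tt e turn_cube
  (fun s s' t t' k => turn_coord_lip s s' (proj1_sig t) (proj1_sig t') k)
  C V _ C_compact V_open u0_W.
by exists r; split=> // u u_u0; apply/W_def; apply: near; exact: u_u0 1%N isT.
Qed.

End Paths.

Definition seg_coord (d : R) (k : nat) : R :=
  match k with 0%N => 1 - d | 1%N => d | _ => 0 end.

Lemma seg_coord_simplex d : 0 <= d <= 1 ->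
  (forall k, (k <= 1)%N -> 0 <= seg_coord d k) /\
  (forall k, (1 < k)%N -> seg_coord d k = 0) /\ sum_f_R0 (seg_coord d) 1 = 1.
Proof.
move=> d_bd; split; first by case=> [|[|k]] //= _; lra.
by split; [case=> [|[|k]] | rewrite /=; lra].
Qed.

Definition seg_pt d (d_bd : 0 <= d <= 1) : simplex 1 := exist _ _ (seg_coord_simplex d d_bd).

Lemma G_map_image_not_closed e : 0 < e < 1 ->
  ~ tclosed (G_top (v00 : sq2 0%N) e) (fun y => exists x, y = G_map bd2 sq2 incl2 v00 e x).
Proof.
move=> [e_pos e_lt1] image_closed.
have complement_open := image_closed 1%N _ (turn_Pm_cont e e_lt1).
have zero_bd : 0 <= 0 <= 1 by lra.
have [r [r_pos near]] := complement_open (seg_pt 0 zero_bd)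
  (fun '(ex_intro x E) => diagonal_not_in_image e e_lt1 x e_pos E).
pose d := Rmin (r / 2) (1 / 2).
have d_bd : 0 <= d <= 1 by rewrite /d; lra_minmax.
apply: (near (seg_pt d d_bd)).
  by case=> [|[|k]] //= _; rewrite /d; lra_minmax.
by apply: turn_in_image => //=; rewrite /d; lra_minmax.
Qed.

Theorem proposition4p4 (eps : R) (Heps : (0 < eps < 1)%R) :
  ~ closed_inclusion (G_top (v00 : bd2 0%nat) eps) (G_top (v00 : sq2 0%nat) eps)
      (G_map bd2 sq2 incl2 v00 eps) /\
  ~ h_cofibration (G_top (v00 : bd2 0%nat) eps) (G_top (v00 : sq2 0%nat) eps)
      (G_map bd2 sq2 incl2 v00 eps).
Proof.
have not_closed_inclusion : ~ closed_inclusion (G_top (v00 : bd2 0%nat) eps)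
    (G_top (v00 : sq2 0%nat) eps) (G_map bd2 sq2 incl2 v00 eps).
  by move=> [_ [image_closed _]]; exact: G_map_image_not_closed Heps image_closed.
by split=> // [[ci _]]; exact: not_closed_inclusion ci.
Qed.
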